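(* For every sequence ${\mathbf s}$ in $\widehat{\mathcal S}$, the inclusion ${\mathcal X}_T({\mathbf s})\subset\bigoplus_{\sigma\in I({\mathbf s})}S_T$ becomes an isomorphism after applying $-\otimes_{S_T}Q_T$.
   Context: $R$ irreducible reduced finite root system (positive roots $R^+$, simple roots $\Pi$, highest root $\gamma$); $\widehat X=X\oplus\mathbb Z$ ($X$ weight lattice), $\delta=(0,-1)$, affine roots $\widehat R=\{\alpha+n\delta:\alpha\in R,n\in\mathbb Z\}$. $\widehat{\mathcal W}$ is generated by $s_{\alpha,n}(v,m)=(v-(\langle\alpha,v\rangle-mn)\alpha^\vee,m)$ and acts contragrediently on $\widehat X$; $\widehat{\mathcal S}=\{s_{\alpha,0}:\alpha\in\Pi\}\cup\{s_{\gamma,1}\}$ with attached simple affine roots $\alpha$ resp. $-\gamma+\delta$. $T$: commutative unital domain, $2$ not a zero divisor, all $\alpha\otimes1$ ($\alpha\in\widehat R$) nonzero in $\widehat X\otimes T$. $S_T$: symmetric algebra of $\widehat X\otimes T$, graded in even degrees. $Q_T=S_T[2^{-1}][\alpha^{-1}:\alpha\in\widehat R]$. For ${\mathbf s}=(s_1,\dots,s_l)$: $I({\mathbf s})$ = strictly increasing tuples in $\{1,\dots,l\}$ (including the empty one), $\operatorname{ev}(i_1,\dots,i_n)=s_{i_1}\cdots s_{i_n}$; ${\mathbf s}'=(s_1,\dots,s_{l-1})$, $I({\mathbf s})=I({\mathbf s}')\sqcup I({\mathbf s}')s_l$ (appending $l$); $\Delta(z)_\gamma=\Delta(z)_{\gamma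 s_l}=z_\gamma$; $c^\lambda$ multiplies the $\sigma$-component by $\operatorname{ev}(\sigma)(\lambda)\otimes1$; $\alpha_l$ the simple affine root of $s_l$. ${\mathcal X}_T(\emptyset)=S_T$, ${\mathcal X}_T({\mathbf s})=\Delta({\mathcal X}_T({\mathbf s}'))+c^{\alpha_l}(\Delta({\mathcal X}_T({\mathbf s}')))\subset\bigoplus_{\sigma\in I({\mathbf s})}S_T$. *)

From HB Require Import structures.
From mathcomp Require Import all_boot all_algebra.
From mathcomp Require Import mpoly.
Set Implicit Arguments. Unset Strict Implicit. Unset Printing Implicit Defensive.
Import GRing.Theory Num.Theory.
Local Open Scope ring_scope.

(* The weight lattice X is Z^n ('rV[int]_n, coordinates e.g. in the basis of
   fundamental weights), the coweight lattice X^v = Hom(X,Z) is also 'rV[int]_n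
   with the standard pairing. *)
Definition pairing (n : nat) (l v : 'rV[int]_n) : int := \sum_(i < n) l 0 i * v 0 i.

Definition zspan (n : nat) (S : seq 'rV[int]_n) (v : 'rV[int]_n) : Prop :=
  exists c : 'rV[int]_n -> int, v = \sum_(a <- S) c a *: a.

Definition srefl (n : nat) (cor : 'rV[int]_n -> 'rV[int]_n) (a b : 'rV[int]_n) :=
  b - pairing b (cor a) *: a.
Definition corefl (n : nat) (cor : 'rV[int]_n -> 'rV[int]_n) (a v : 'rV[int]_n) :=
  v - pairing a v *: cor a.

(* (X, R, X^v, R^v) is the root datum of an irreducible reduced finite root
   system R (with coroot map cor), and X is the weight lattice, i.e. the
   coroots span X^v = Hom(X,Z) over Z and the roots span X over Q. *)
Definition irr_red_root_system_wtlattice (n : nat) (R : seq 'rV[int]_n)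
    (cor : 'rV[int]_n -> 'rV[int]_n) : Prop :=
  [/\ R != [::], uniq R, 0 \notin R,
      (forall a, a \in R -> pairing a (cor a) = 2) &
      (forall a b, a \in R -> b \in R -> srefl cor a b \in R)] /\
  (forall a b, a \in R -> b \in R -> cor (srefl cor a b) = corefl cor a (cor b)) /\
  (forall a b, a \in R -> b \in R -> forall p q : int, (p != 0) || (q != 0) ->
      p *: a = q *: b -> b = a \/ b = - a) /\
  (forall P : pred 'rV[int]_n,
      (forall a b, a \in R -> b \in R -> P a -> ~~ P b -> pairing b (cor a) = 0) ->
      all P R \/ all (predC P) R) /\
  (forall v, zspan (map cor R) v) /\
  (forall v, exists q : int, q != 0 /\ zspan R (q *: v)).

Definition is_base (n : nat) (R Pi : seq 'rV[int]_n) : Prop :=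
  [/\ uniq Pi, {subset Pi <= R},
      (forall c : 'rV[int]_n -> int, \sum_(p <- Pi) c p *: p = 0 ->
          forall p, p \in Pi -> c p = 0) &
      (forall a, a \in R -> exists c : 'rV[int]_n -> int,
          a = \sum_(p <- Pi) c p *: p /\
          ((forall p, p \in Pi -> 0 <= c p) \/ (forall p, p \in Pi -> c p <= 0)))].

Definition highest_root (n : nat) (R Pi : seq 'rV[int]_n) (gam : 'rV[int]_n) : Prop :=
  gam \in R /\ forall b, b \in R -> exists c : 'rV[int]_n -> int,
    (forall p, p \in Pi -> 0 <= c p) /\ gam - b = \sum_(p <- Pi) c p *: p.

(* Xhat = X (+) Z, elements (lambda, k); delta = (0, -1). *)
(* A generator s_{alpha,m} of the affine Weyl group is encoded by (alpha, m). *)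
Definition in_Shat (n : nat) (Pi : seq 'rV[int]_n) (gam : 'rV[int]_n)
    (g : 'rV[int]_n * int) : Prop :=
  (g.1 \in Pi /\ g.2 = 0) \/ g = (gam, 1).

(* Contragredient action of s_{alpha,m} on Xhat:
   (lambda,k) |-> (lambda,k) - <lambda,alpha^v> (alpha, m),
   dual to s_{alpha,m}(v,m') = (v - (<alpha,v> - m' m) alpha^v, m')
   for the pairing <(lambda,k),(v,m')> = <lambda,v> - k m'. *)
Definition sact (n : nat) (cor : 'rV[int]_n -> 'rV[int]_n)
    (g : 'rV[int]_n * int) (x : 'rV[int]_n * int) : 'rV[int]_n * int :=
  let c := pairing x.1 (cor g.1) in (x.1 - c *: g.1, x.2 - g.2 * c).

(* ev(sigma)(x), sigma encoded as a mask m over s (m_i = true iff i in sigma). *)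
Definition ev (n : nat) (cor : 'rV[int]_n -> 'rV[int]_n)
    (s : seq ('rV[int]_n * int)) (m : seq bool) (x : 'rV[int]_n * int) :=
  foldr (fun p acc => if p.2 then sact cor p.1 acc else acc) x (zip s m).

(* simple affine root attached to a generator in Shat:
   s_{alpha,0} |-> alpha = (alpha,0);  s_{gam,1} |-> -gam + delta = (-gam,-1). *)
Definition sroot (n : nat) (g : 'rV[int]_n * int) : 'rV[int]_n * int :=
  if g.2 == 0 then (g.1, 0) else (- g.1, -1).

(* x |-> x (x) 1 : Xhat -> Xhat (x) T  inside S_T = Sym(Xhat (x) T) = T[X_0..X_n]
   (variables X_0..X_{n-1} for the basis of X, X_n for the Z-summand). *)
Definition emb (T : comNzRingType) (n : nat) (x : 'rV[int]_n * int) : {mpoly T[n.+1]} :=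
  \sum_(i < n) ((x.1 0 i)%:~R : T) *: 'X_(widen_ord (leqnSn n) i)
  + ((x.2)%:~R : T) *: 'X_ord_max.

(* Elements of (+)_{sigma in I(s)} S_T: functions on masks, only the masks of
   size (size s) matter.  Membership in X_T(s), defined by recursion on s
   read from the end (r = rev s). *)
Fixpoint XmemR (T : comNzRingType) (n : nat) (cor : 'rV[int]_n -> 'rV[int]_n)
    (r : seq ('rV[int]_n * int)) (z : seq bool -> {mpoly T[n.+1]}) : Prop :=
  match r with
  | [::] => True
  | g :: r' => exists x y, XmemR cor r' x /\ XmemR cor r' y /\
      forall m : seq bool, size m = (size r').+1 ->
        z m = x (take (size r') m)
              + emb T (ev cor (rev r) m (sroot g)) * y (take (size r') m)
  end.

Definition Xmem (T : comNzRingType) (n : nat) (cor : 'rV[int]_n -> 'rV[int]_n)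
    (s : seq ('rV[int]_n * int)) (z : seq bool -> {mpoly T[n.+1]}) : Prop :=
  XmemR cor (rev s) z.

(* d lies in the multiplicative set generated by 2 and the affine roots
   alpha + j delta = (alpha, -j), alpha in R, j in Z; Q_T = S_T[D^-1]. *)
Definition in_D (T : comNzRingType) (n : nat) (R : seq 'rV[int]_n) (d : {mpoly T[n.+1]}) : Prop :=
  exists (k : nat) (l : seq ('rV[int]_n * int)),
    all (fun a => a.1 \in R) l /\ d = 2 ^+ k * \prod_(a <- l) emb T a.

From mathcomp Require Import all_boot all_algebra.
From mathcomp Require Import mpoly.
From mathcomp Require Import ring.
Set Implicit Arguments. Unset Strict Implicit.
Import GRing.Theory.
Local Open Scope ring_scope.

(* Induction on the last generator s_l.  Elements of X_T(s) are the z with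
   z(sigma) = x(sigma') + ev(sigma)(alpha_l) y(sigma') for x, y in X_T(s').
   Since s_l reflects its own simple affine root, the two extensions sigma' and
   sigma' s_l of a mask carry the opposite roots a and -a, where
   a = ev(sigma')(alpha_l); hence x = (z0 + z1)/2 and y = (z0 - z1)/(2a).  The
   denominators 2 and a (the latter an affine root) are cleared simultaneously
   for all masks by multiplying with 2 and the product of all the a's, and the
   induction hypothesis clears those of x and y in X_T(s'). *)

Section Reflections.
Variables (n : nat) (cor : 'rV[int]_n -> 'rV[int]_n).

Lemma pairingNl (v w : 'rV[int]_n) : pairing (- v) w = - pairing v w.
Proof. by rewrite /pairing -sumrN; apply: eq_bigr => i _; rewrite mxE mulNr. Qed.

Lemma sactN g x : sact cor g (- x) = - sact cor g x.
Proof.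
rewrite /sact /= pairingNl; congr (_, _); first by rewrite scaleNr opprD !opprK.
by rewrite mulrN opprD !opprK.
Qed.

Lemma evN s m x : ev cor s m (- x) = - ev cor s m x.
Proof.
elim: s m => [|g s IH] [|b m] //=; rewrite /ev /= -!/(ev _ _ _ _) IH.
by case: b; rewrite ?sactN.
Qed.

Lemma ev_rcons s g m b x : size s = size m ->
  ev cor (rcons s g) (rcons m b) x = ev cor s m (if b then sact cor g x else x).
Proof. by move=> Hsz; rewrite /ev zip_rcons // foldr_rcons. Qed.

Variable R : seq 'rV[int]_n.
Hypothesis pairing_coroot : forall a, a \in R -> pairing a (cor a) = 2.
Hypothesis srefl_root : forall a b, a \in R -> b \in R -> srefl cor a b \in R.

Lemma oppr_root a : a \in R -> - a \in R.
Proof.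
move=> Ra; have := srefl_root Ra Ra.
by rewrite /srefl pairing_coroot // scaler_nat mulr2n opprD addrA subrr sub0r.
Qed.

Lemma sroot_root g : g.1 \in R -> (sroot g).1 \in R.
Proof. by rewrite /sroot; case: eqP => _ Rg //=; apply: oppr_root. Qed.

Lemma sact_sroot g : g.1 \in R -> g.2 = 0 \/ g.2 = 1 ->
  sact cor g (sroot g) = - sroot g.
Proof.
move=> Rg [|] g2; rewrite /sroot /sact g2 /=.
  rewrite pairing_coroot //; congr (_, _).
  by rewrite scaler_nat mulr2n opprD addrA subrr sub0r.
rewrite pairingNl pairing_coroot //; congr (_, _).
by rewrite scaleNr opprK scaler_nat mulr2n addrA addNr add0r opprK.
Qed.

Lemma ev_root s m x : (forall g, g \in s -> g.1 \in R) -> x.1 \in R ->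
  (ev cor s m x).1 \in R.
Proof.
move=> Rs Rx; elim: s m Rs => [|g s IH] [|b m] Rs //=.
rewrite /ev /= -/(ev cor s m x).
have Rev := IH m (fun h sh => Rs h (@mem_behead _ (g :: s) h sh)).
by case: b => //=; apply: srefl_root => //; apply: Rs; rewrite mem_head.
Qed.

Lemma ev_rcons_sroot s g m b : g.1 \in R -> g.2 = 0 \/ g.2 = 1 -> size s = size m ->
  ev cor (rcons s g) (rcons m b) (sroot g)
  = if b then - ev cor s m (sroot g) else ev cor s m (sroot g).
Proof. by move=> Rg g2 Hsz; rewrite ev_rcons //; case: b; rewrite ?sact_sroot ?evN. Qed.

End Reflections.

Section Denominators.
Variables (T : comNzRingType) (n : nat) (R : seq 'rV[int]_n).

Lemma embN (x : 'rV[int]_n * int) : emb T (- x) = - emb T x.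
Proof.
rewrite /emb /= opprD -sumrN; congr (_ + _); last by rewrite mulrNz scaleNr.
by apply: eq_bigr => i _; rewrite mxE mulrNz scaleNr.
Qed.

Lemma in_D1 : in_D (T:=T) R 1.
Proof. by exists 0%N, [::]; rewrite big_nil expr0 mulr1. Qed.

Lemma in_D2 : in_D (T:=T) R 2.
Proof. by exists 1%N, [::]; rewrite big_nil expr1 mulr1. Qed.

Lemma in_D_emb x : x.1 \in R -> in_D (T:=T) R (emb T x).
Proof. by move=> Rx; exists 0%N, [:: x]; rewrite big_seq1 expr0 mul1r /= Rx. Qed.

Lemma in_DM a b : in_D (T:=T) R a -> in_D R b -> in_D R (a * b).
Proof.
move=> [k [l [Rl ->]]] [k' [l' [Rl' ->]]].
exists (k + k')%N, (l ++ l'); rewrite all_cat Rl Rl'; split=> //.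
by rewrite big_cat exprD /=; ring.
Qed.

Lemma in_D_prod (I : eqType) (r : seq I) (F : I -> {mpoly T[n.+1]}) :
  (forall i, i \in r -> in_D R (F i)) -> in_D R (\prod_(i <- r) F i).
Proof.
move=> DF; rewrite big_seq; apply: big_ind => //; [exact: in_D1 | exact: in_DM].
Qed.

End Denominators.

Definition masks (l : nat) : seq (seq bool) := [seq val t | t : l.-tuple bool].

Lemma mem_masks l m : size m = l -> m \in masks l.
Proof.
move=> Hsz; have Hm : size m == l by rewrite Hsz.
by apply/mapP; exists (Tuple Hm); rewrite ?mem_enum.
Qed.

Section Localization.
Variables (T : comNzRingType) (n : nat) (R : seq 'rV[int]_n)
  (cor : 'rV[int]_n -> 'rV[int]_n).
Hypothesis pairing_coroot : forall a, a \in R -> pairing a (cor a) = 2.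
Hypothesis srefl_root : forall a b, a \in R -> b \in R -> srefl cor a b \in R.

Lemma XmemR_scale r (c : {mpoly T[n.+1]}) z :
  XmemR cor r z -> XmemR cor r (fun m => c * z m).
Proof.
elim: r z => [|g r IH] z //= [x [y [Xx [Xy Hz]]]].
exists (fun m => c * x m), (fun m => c * y m).
split; first exact: IH; split; first exact: IH.
by move=> m Hm; rewrite Hz //; ring.
Qed.

Definition XmemR_localizes (r : seq ('rV[int]_n * int)) : Prop :=
  forall z : seq bool -> {mpoly T[n.+1]},
    exists2 d, in_D R d & XmemR cor r (fun m => d * z m).

Lemma XmemR_localizes_cons g r :
  g.1 \in R -> g.2 = 0 \/ g.2 = 1 -> (forall h, h \in r -> h.1 \in R) ->
  XmemR_localizes r -> XmemR_localizes (g :: r).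
Proof.
move=> Rg g2 Rr IH z.
pose a m := emb T (ev cor (rev r) m (sroot g)).
pose P := \prod_(m <- masks (size r)) a m.
pose Q m := \prod_(m0 <- rem m (masks (size r))) a m0.
pose z0 m := z (rcons m false); pose z1 m := z (rcons m true).
have [dx Ddx Xx] := IH (fun m => P * (z0 m + z1 m)).
have [dy Ddy Xy] := IH (fun m => Q m * (z0 m - z1 m)).
exists (dx * dy * 2 * P).
  apply: in_DM; last apply: in_D_prod => m _.
    by apply: in_DM; [exact: in_DM | exact: in_D2].
  apply/in_D_emb/(ev_root srefl_root).
    by move=> h; rewrite mem_rev; apply: Rr.
  exact: (sroot_root pairing_coroot srefl_root).
exists (fun m => dy * (dx * (P * (z0 m + z1 m)))).
exists (fun m => dx * (dy * (Q m * (z0 m - z1 m)))).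
split; first exact: XmemR_scale; split; first exact: XmemR_scale.
case/lastP => [|m b] //; rewrite size_rcons => -[Hsz].
have -> : take (size r) (rcons m b) = m by rewrite -Hsz -cats1 take_size_cat.
have -> : P = a m * Q m by rewrite /P (big_rem _ (mem_masks Hsz)).
rewrite rev_cons (ev_rcons_sroot pairing_coroot) ?size_rev //.
by case: b; rewrite ?embN -/(a m) -/(z0 m) -/(z1 m); ring.
Qed.

Lemma XmemR_localizes_all r :
  (forall g, g \in r -> g.1 \in R /\ (g.2 = 0 \/ g.2 = 1)) -> XmemR_localizes r.
Proof.
elim: r => [|g r IH] Hr z; first by exists 1; [exact: in_D1 |].
have [Rg g2] := Hr g (mem_head _ _).
have Hr' h (rh : h \in r) := Hr h (@mem_behead _ (g :: r) h rh).
by apply: XmemR_localizes_cons => // [h /Hr' []|]; [|apply: IH].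
Qed.

End Localization.

Theorem lemma6p3 (T : idomainType) (n : nat) (R : seq 'rV[int]_n)
    (cor : 'rV[int]_n -> 'rV[int]_n) (Pi : seq 'rV[int]_n) (gam : 'rV[int]_n)
    (HR : irr_red_root_system_wtlattice R cor) (HPi : is_base R Pi)
    (Hgam : highest_root R Pi gam)
    (H2 : (2 : T) != 0)
    (Haff : forall a, a \in R -> forall j : int, emb T (a, j) != 0)
    (s : seq ('rV[int]_n * int)) (Hs : forall g, g \in s -> in_Shat Pi gam g) :
  forall z : seq bool -> {mpoly T[n.+1]},
    exists2 d : {mpoly T[n.+1]}, in_D R d & Xmem cor s (fun m => d * z m).
Proof.
(* [H2] and [Haff] only make the localization nontrivial (no denominator in D
   vanishes); clearing denominators does not need them. *)
have [[_ _ _ pairing_coroot srefl_root] _] := HR.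
have [_ Pi_sub_R _ _] := HPi.
have [Rgam _] := Hgam.
apply: (XmemR_localizes_all pairing_coroot srefl_root) => g.
rewrite mem_rev => /Hs [[/Pi_sub_R Rg ->] | ->]; by [split; [|left] | split; [|right]].
Qed.
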